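(* Let $M=\begin{pmatrix}a&b\\c&d\end{pmatrix}\in\mathrm{Mat}(2,\mathbb{Z})$ with $\mathrm{mgcd}(M)=r\neq0$. Then for all integers $n\ge2$, the reduction of $M$ mod $n$ is $\mathrm{Mat}(2,\mathbb{Z}_n)^\times$-conjugate to the reduction mod $n$ of the integer matrix $\begin{pmatrix}a&bc/r\\ r&d\end{pmatrix}$.
   Context: $\mathrm{mgcd}(M)=\gcd(b,c,d-a)\ge0$. $\mathbb{Z}_n=\mathbb{Z}/n\mathbb{Z}$ and $\mathrm{Mat}(2,\mathbb{Z}_n)^\times$ is the group of invertible $2\times2$ matrices over $\mathbb{Z}_n$. *)

From mathcomp Require Import all_boot all_order all_algebra.
Set Implicit Arguments. Unset Strict Implicit. Unset Printing Implicit Defensive.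
Import GRing.Theory Num.Theory.
Local Open Scope ring_scope.

Definition mx22 (a b c d : int) : 'M[int]_2 :=
  \matrix_(i < 2, j < 2)
    if i == 0 :> nat then (if j == 0 :> nat then a else b)
    else (if j == 0 :> nat then c else d).

Definition mgcd (M : 'M[int]_2) : int :=
  gcdz (gcdz (M 0 1) (M 1 0)) (M 1 1 - M 0 0).

(* Entrywise reduction of an integer matrix modulo n (meaningful for n >= 2). *)
Definition red_mod (n : nat) (M : 'M[int]_2) : 'M['Z_n]_2 :=
  map_mx (fun x : int => x%:~R) M.

Definition GL2_conj (R : comUnitRingType) (A B : 'M[R]_2) : Prop :=
  exists P : 'M[R]_2, P \in unitmx /\ P *m A *m invmx P = B.

From mathcomp Require Import all_boot all_order all_algebra.
From mathcomp Require Import ring.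
Set Implicit Arguments. Unset Strict Implicit. Unset Printing Implicit Defensive.
Import GRing.Theory Num.Theory.
Local Open Scope ring_scope.

(* Write b = b' r, c = c' r and d - a = e' r, so that gcd(b', c', e') = 1.
   For all integers x, y the matrix P = [[x, b' y], [y, c' x + e' y]] satisfies
   M P = P N, where N = [[a, r b' c'], [r, a + e' r]] is the target matrix, and
   det P = c' x^2 + e' x y - b' y^2 is a value of a primitive binary quadratic
   form.  Such a form takes a value prime to n: let x be the product of the
   primes p | n with p | c' and p not dividing b', and y the product of the
   primes p | n not dividing c'; modulo each p | n exactly one of the three
   monomials survives.  Hence P is invertible modulo n. *)


Lemma prime_dvd_prod_primes (p : nat) (P : pred nat) (s : seq nat) :
  prime p -> all prime s ->
  (p %| \prod_(q <- s | P q) q)%N = (p \in s) && P p.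
Proof.
move=> p_pr /allP s_pr; rewrite Euclid_dvd_prod // big_has_cond.
rewrite (@eq_in_has _ _ (predI P (pred1 p))); last first.
  by move=> q q_s /=; rewrite dvdn_prime2 ?(s_pr q q_s) // eq_sym.
apply/hasP/andP => [[q s_q /andP[Pq /eqP<-]]|[s_p Pp]] //.
by exists p; rewrite //= Pp eqxx.
Qed.

Lemma coprime_prime_dvd (m n : nat) : (0 < m)%N ->
  (forall p, prime p -> (p %| m)%N -> ~~ (p %| n)%N) -> coprime m n.
Proof.
move=> m_gt0 primes_n; apply: contraT => g_neq1.
have g_gt1 : (1 < gcdn m n)%N by rewrite ltn_neqAle eq_sym g_neq1 gcdn_gt0 m_gt0.
have p_m := dvdn_trans (pdiv_dvd _) (dvdn_gcdl m n).
have p_n := dvdn_trans (pdiv_dvd _) (dvdn_gcdr m n).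
by have := primes_n _ (pdiv_prime g_gt1) p_m; rewrite p_n.
Qed.

Lemma quad_form_neq0 (R : idomainType) (b c e x y : R) :
  ~~ [&& b == 0, c == 0 & e == 0] ->
  (x == 0) = (c == 0) && (b != 0) -> (y == 0) = (c != 0) ->
  c * x ^+ 2 + e * x * y - b * y ^+ 2 != 0.
Proof.
have [-> | c0] := eqVneq c 0; last first.
  move=> _ /= /negbT x0 /eqP->.
  by rewrite mulr0 addr0 expr0n /= mulr0 subr0 mulf_neq0 ?expf_neq0.
rewrite mul0r add0r; have [-> | b0] := eqVneq b 0; rewrite ?eqxx ?b0 /=.
  by move=> e0 /negbT x0 /negbT y0; rewrite mul0r subr0 !mulf_neq0.
by move=> _ /eqP-> /negbT y0; rewrite mulr0 mul0r sub0r oppr_eq0 mulf_neq0 ?expf_neq0.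
Qed.

Lemma primitive_form_coprime_value (n : nat) (b c e : int) : (0 < n)%N ->
  coprimez (gcdz (gcdz b c) e) n ->
  exists x y : int, coprimez (c * x ^+ 2 + e * x * y - b * y ^+ 2) n.
Proof.
move=> n_gt0 prim.
pose x := \prod_(q <- primes n | (q%:Z %| c)%Z && ~~ (q%:Z %| b)%Z) q.
pose y := \prod_(q <- primes n | ~~ (q%:Z %| c)%Z) q.
exists x%:Z, y%:Z; rewrite coprimez_sym coprimezE absz_nat.
apply: coprime_prime_dvd => // p p_pr p_n.
have p_primes : p \in primes n by rewrite mem_primes p_pr n_gt0.
have modpE (z : int) : (p%:Z %| z)%Z = (z%:~R == 0 :> 'F_p).
  exact: dvdz_pcharf (pchar_Fp p_pr) z.
rewrite -{1}(absz_nat p) -dvdzE modpE !(rmorphB, rmorphD, rmorphM) /=.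
have natE (k : nat) : ((k%:Z)%:~R == 0 :> 'F_p) = (p %| k)%N by rewrite -modpE.
apply: quad_form_neq0; rewrite ?natE -?modpE ?prime_dvd_prod_primes ?all_prime_primes ?p_primes //.
apply/and3P => -[p_b p_c p_e].
have : (p%:Z %| gcdz (gcdz (gcdz b c) e) n)%Z.
  by rewrite !dvdz_gcd p_b p_c p_e dvdzE !absz_nat.
by rewrite (eqP prim) dvdzE absz_nat dvdn1 => /eqP p1; rewrite p1 in p_pr.
Qed.

Lemma intr_unit_Zp (n : nat) (z : int) : (1 < n)%N ->
  ((z%:~R : 'Z_n) \is a GRing.unit) = coprimez z n.
Proof.
move=> n_gt1; rewrite coprimez_sym coprimezE absz_nat.
by case: z => k; rewrite ?NegzE ?rmorphN ?unitrN unitZpE.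
Qed.

Lemma det_mx22 (a b c d : int) : \det (mx22 a b c d) = a * d - b * c.
Proof.
rewrite (expand_det_row _ 0) !big_ord_recl big_ord0 /cofactor !det_mx11 !mxE /=.
by rewrite /bump /= expr0 expr1 mul1r mulN1r addr0 mulrN.
Qed.

Lemma mx22_intertwine (a b c e r x y : int) :
  mx22 a (b * r) (c * r) (a + e * r) *m mx22 x (b * y) y (c * x + e * y) =
  mx22 x (b * y) y (c * x + e * y) *m mx22 a (r * b * c) r (a + e * r).
Proof.
apply/matrixP=> i j; case: i => [[|[|//]] Hi]; case: j => [[|[|//]] Hj];
  rewrite !mxE !big_ord_recl !big_ord0 !mxE /=; ring.
Qed.

Lemma mx22_conj_mod (n : nat) (a b c e r : int) : (1 < n)%N ->
  coprimez (gcdz (gcdz b c) e) n ->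
  GL2_conj (red_mod n (mx22 a (b * r) (c * r) (a + e * r)))
           (red_mod n (mx22 a (r * b * c) r (a + e * r))).
Proof.
move=> n_gt1 prim.
have [x [y det_cop]] := primitive_form_coprime_value (ltnW n_gt1) prim.
pose P := mx22 x (b * y) y (c * x + e * y).
have P_unit : red_mod n P \in unitmx.
  rewrite unitmxE det_map_mx det_mx22 intr_unit_Zp //.
  by congr coprimez: det_cop; ring.
exists (invmx (red_mod n P)); split; first by rewrite unitmx_inv.
by rewrite invmxK -mulmxA -map_mxM mx22_intertwine map_mxM mulKmx.
Qed.

Lemma gcdz3_cofactors (b c e : int) (r := gcdz (gcdz b c) e) : r != 0 ->
  exists b' c' e',
    [/\ b = b' * r, c = c' * r, e = e' * r & gcdz (gcdz b' c') e' = 1].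
Proof.
move=> r0.
have r_b : (r %| b)%Z by apply: dvdz_trans (dvdz_gcdl _ _) (dvdz_gcdl _ _).
have r_c : (r %| c)%Z by apply: dvdz_trans (dvdz_gcdl _ _) (dvdz_gcdr _ _).
have r_e : (r %| e)%Z by apply: dvdz_gcdr.
exists (b %/ r)%Z, (c %/ r)%Z, (e %/ r)%Z; rewrite !divzK //; split=> //.
have r_abs : `|r|%:Z = r by [].
apply: (mulIf r0); rewrite -[X in _ * X = _]r_abs mulz_gcdl.
by rewrite -[X in gcdz (_ * X) _]r_abs mulz_gcdl !divzK // mul1r.
Qed.

Theorem proposition37 (a b c d : int) :
  mgcd (mx22 a b c d) != 0 ->
  forall n : nat, (2 <= n)%N ->
    GL2_conj (red_mod n (mx22 a b c d))
      (red_mod n (mx22 a ((b * c) %/ mgcd (mx22 a b c d))%Z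
                       (mgcd (mx22 a b c d)) d)).
Proof.
have -> : mgcd (mx22 a b c d) = gcdz (gcdz b c) (d - a) by rewrite /mgcd !mxE.
move=> r0 n n_gt1; have [b' [c' [e' [Eb Ec Ed prim]]]] := gcdz3_cofactors r0.
move: r0 Eb Ec Ed; set r := gcdz _ _ => r0 -> -> Ed; clearbody r.
have -> : d = a + e' * r by rewrite -Ed addrC subrK.
have -> : ((b' * r * (c' * r)) %/ r)%Z = r * b' * c'.
  by rewrite -(mulzK (r * b' * c') r0); congr (_ %/ _)%Z; ring.
by apply: mx22_conj_mod; rewrite // /coprimez prim gcd1z.
Qed.
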